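(* Let $N\ge 1$ and let $i,j,k\in\{1,\dots,N\}$. For an $N^3\times N^3$ matrix $\mathbf{M}$ with rows and columns indexed by three-letter words over $\{1,\dots,N\}$, let $\mathbf{M}_{[i,j,k]}$ denote the submatrix consisting of the rows and columns whose labels are rearrangements of the multiset $[i,j,k]$ (in lexicographic order), and let $n$ be the number of such rearrangements. Then for pairwise distinct indices $\alpha,\beta,\gamma$: (a) $(\mathbf{R}_{\beta\alpha}\otimes\mathbf{I}_N)_{[i,j,k]}(\mathbf{R}_{\alpha\beta}\otimes\mathbf{I}_N)_{[i,j,k]}=(\mathbf{I}_N\otimes\mathbf{R}_{\beta\alpha})_{[i,j,k]}(\mathbf{I}_N\otimes\mathbf{R}_{\alpha\beta})_{[i,j,k]}=\mathbf{I}_n$; (b) $(\mathbf{R}_{\gamma\beta}\otimes\mathbf{I}_N)_{[i,j,k]}(\mathbf{I}_N\otimes\mathbf{R}_{\gamma\alpha})_{[i,j,k]}(\mathbf{R}_{\beta\alpha}\otimes\mathbf{I}_N)_{[i,j,k]}=(\mathbf{I}_N\otimes\mathbf{R}_{\beta\alpha})_{[i,j,k]}(\mathbf{R}_{\gamma\alpha}\otimes\mathbf{I}_N)_{[i,j,k]}(\mathbf{I}_N\otimes\mathbf{R}_{\gamma\beta})_{[i,j,k]}$.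
   Context: Fix $0<p<1$, $q=1-p$. For nonzero complex $\xi_\alpha,\xi_\beta$ set $D=p+q\xi_\alpha\xi_\beta-\xi_\alpha$ and $S_{\beta\alpha}=-\frac{p+q\xi_\alpha\xi_\beta-\xi_\beta}{D}$, $P_{\beta\alpha}=\frac{(p-q\xi_\alpha)(\xi_\beta-1)}{D}$, $Q_{\beta\alpha}=\frac{(p-q\xi_\beta)(\xi_\alpha-1)}{D}$, $T_{\beta\alpha}=\frac{\xi_\beta-\xi_\alpha}{D}$. $\mathbf{R}_{\beta\alpha}$ is the $N^2\times N^2$ matrix with rows and columns indexed by two-letter words $ij$ over $\{1,\dots,N\}$ in lexicographic order, with entries $[\mathbf{R}_{\beta\alpha}]_{ij,kl}=S_{\beta\alpha}$ if $kl=ij$, $i=j$; $P_{\beta\alpha}$ if $kl=ij$, $i<j$; $Q_{\beta\alpha}$ if $kl=ij$, $i>j$; $pT_{\beta\alpha}$ if $kl=ji$, $i<j$; $qT_{\beta\alpha}$ if $kl=ji$, $i>j$; and $0$ otherwise. $\otimes$ is the Kronecker product, with rows/columns of $N^3\times N^3$ matrices indexed by three-letter words in lexicographic order. *)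

From HB Require Import structures.
From mathcomp Require Import all_boot all_order all_algebra.
Set Implicit Arguments. Unset Strict Implicit. Unset Printing Implicit Defensive.
Import Order.TTheory GRing.Theory Num.Theory.
Local Open Scope ring_scope.

(* Letters of words are 0-based: the letter a in {1..N} of the paper is a-1 here,
   a nat in [0, N).  Words are tuples of nats.  All definitions are over an
   arbitrary numClosedFieldType C (e.g. the complex numbers). *)

Section RMat.
Variable C : numClosedFieldType.
Variable p : C.
Definition qq : C := 1 - p.

(* xa = xi_alpha, xb = xi_beta; the following are S_{beta alpha}, etc. *)
Definition Dd (xa xb : C) : C := p + qq * xa * xb - xa.
Definition Sc (xa xb : C) : C := - (p + qq * xa * xb - xb) / Dd xa xb.
Definition Pc (xa xb : C) : C := (p - qq * xa) * (xb - 1) / Dd xa xb.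
Definition Qc (xa xb : C) : C := (p - qq * xb) * (xa - 1) / Dd xa xb.
Definition Tc (xa xb : C) : C := (xb - xa) / Dd xa xb.

(* entry [R_{beta alpha}]_{ij,kl}, with xa = xi_alpha, xb = xi_beta *)
Definition Rent (xa xb : C) (i j k l : nat) : C :=
  if (k == i) && (l == j) then
    (if i == j then Sc xa xb else if (i < j)%N then Pc xa xb else Qc xa xb)
  else if (k == j) && (l == i) then
    (if (i < j)%N then p * Tc xa xb else qq * Tc xa xb)
  else 0.

Definition word3 := (nat * nat * nat)%type.

(* entries of R_{beta alpha} (x) I_N  and  I_N (x) R_{beta alpha} (Kronecker product,
   lexicographic indexing by three-letter words) *)
Definition RI (xa xb : C) (w v : word3) : C :=
  let: (a, b, c) := w in let: (a', b', c') := v in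
  Rent xa xb a b a' b' * (c == c')%:R.
Definition IR (xa xb : C) (w v : word3) : C :=
  let: (a, b, c) := w in let: (a', b', c') := v in
  (a == a')%:R * Rent xa xb b c b' c'.
End RMat.

Definition words3 (N : nat) : seq word3 :=
  flatten [seq [seq (a, b, c) | b <- iota 0 N, c <- iota 0 N] | a <- iota 0 N].

Definition rearr (N i j k : nat) : seq word3 :=
  [seq w <- words3 N | perm_eq [:: w.1.1; w.1.2; w.2] [:: i; j; k]].

Definition subM (C : numClosedFieldType) (N i j k : nat) (M : word3 -> word3 -> C)
  : 'M[C]_(size (rearr N i j k)) :=
  \matrix_(r, s) M (nth (0, 0, 0)%N (rearr N i j k) r) (nth (0, 0, 0)%N (rearr N i j k) s).

From mathcomp Require Import all_boot all_order all_algebra.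
From mathcomp Require Import ring.
Set Implicit Arguments. Unset Strict Implicit. Unset Printing Implicit Defensive.
Import Order.TTheory GRing.Theory Num.Theory.
Local Open Scope ring_scope.

(* The entries of R (x) I and I (x) R depend on the letters of their row and
   column words only through equalities and order comparisons between them, so
   a strictly increasing relabelling of the alphabet preserves them.  Sorting
   the letters of [i,j,k] yields such a relabelling, carrying the block over
   {0,1,2} of one of the order types 012, 011, 001, 000 onto the block [i,j,k].
   As a product of blocks only sums over the block, (a) and (b) transfer from
   these four small blocks, of sizes 6, 3, 3 and 1, where they are identities
   between rational functions of p and the spectral parameters. *)

Definition letters (w : word3) : seq nat := [:: w.1.1; w.1.2; w.2].

Definition relabel (g : nat -> nat) (w : word3) : word3 := (g w.1.1, g w.1.2, g w.2).

Lemma letters_relabel g w : letters (relabel g w) = map g (letters w).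
Proof. by []. Qed.

Lemma relabel_inj g : injective g -> injective (relabel g).
Proof. by move=> g_inj [[a b] c] [[a' b'] c'] [/g_inj -> /g_inj -> /g_inj ->]. Qed.

Lemma mem_words3 N w : (w \in words3 N) = all (fun x => x < N)%N (letters w).
Proof.
case: w => [[a b] c]; rewrite /words3 /= andbT.
apply/flatten_mapP/and3P.
  move=> [a' + /allpairsP [[b' c'] /= [+ + [-> -> ->]]]].
  by rewrite !mem_iota.
move=> [ha hb hc]; exists a; rewrite ?mem_iota //.
by apply/allpairsP; exists (b, c); rewrite !mem_iota.
Qed.

Lemma uniq_words3 N : uniq (words3 N).
Proof.
have -> : words3 N = [seq (a, bc.1, bc.2) | a <- iota 0 N,
                      bc <- [seq (b, c) | b <- iota 0 N, c <- iota 0 N]].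
  by congr flatten; apply: eq_map => a; rewrite map_allpairs.
rewrite allpairs_uniq ?allpairs_uniq ?iota_uniq //.
  by move=> [b c] [b' c'] _ _ [-> ->].
by move=> [a [b c]] [a' [b' c']] _ _ [-> -> ->].
Qed.

Lemma uniq_rearr N i j k : uniq (rearr N i j k).
Proof. exact/filter_uniq/uniq_words3. Qed.

Lemma mem_rearr N i j k w : all (fun x => x < N)%N [:: i; j; k] ->
  (w \in rearr N i j k) = perm_eq (letters w) [:: i; j; k].
Proof.
move=> ijkN; rewrite mem_filter mem_words3.
by case: (boolP (perm_eq _ _)) => [/perm_all ->|].
Qed.

Lemma rearr_relabel g N i j k M i0 j0 k0 : injective g ->
  all (fun x => x < N)%N [:: i; j; k] -> all (fun x => x < M)%N [:: i0; j0; k0] ->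
  perm_eq [:: i; j; k] (map g [:: i0; j0; k0]) ->
  perm_eq (rearr N i j k) (map (relabel g) (rearr M i0 j0 k0)).
Proof.
move=> g_inj ijkN ijkM ijk_g.
apply: uniq_perm => [||w]; rewrite ?(map_inj_uniq (relabel_inj g_inj)) ?uniq_rearr //.
rewrite mem_rearr //; apply/idP/mapP => [w_ijk | [w0 + ->]]; last first.
  rewrite mem_rearr // letters_relabel => /(perm_map g) w0_ijk.
  by rewrite (perm_trans w0_ijk) // perm_sym.
have {w_ijk} w_g := perm_trans w_ijk ijk_g.
have w_sub : {subset letters w <= map g [:: i0; j0; k0]}.
  by move=> x; rewrite (perm_mem w_g).
have [t _ w_t] := iffLR (subset_mapP _ _ _) w_sub.
case: w {w_sub} w_t w_g => [[a b] c].
case: t => [|x [|y [|z []]]] //= [-> -> ->] xyz_g.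
by exists (x, y, z); rewrite // mem_rearr //; apply: (perm_map_inj g_inj).
Qed.

Definition embed3 (a b c n : nat) : nat :=
  match n with 0 => a | 1 => b | n.+2 => n + c end.

Lemma embed3_incr a b c : (a < b < c)%N -> {homo embed3 a b c : m n / (m < n)%N}.
Proof.
move=> /andP [ab bc]; apply: homo_ltn; first exact: ltn_trans.
by case=> [|[|n]].
Qed.

Definition order_patterns : seq word3 :=
  [:: (0, 1, 2); (0, 1, 1); (0, 0, 1); (0, 0, 0)]%N.

Lemma order_pattern3 (i j k : nat) : exists g : nat -> nat, exists i0 j0 k0,
  [/\ {homo g : m n / (m < n)%N}, (i0, j0, k0) \in order_patterns
    & perm_eq [:: i; j; k] (map g [:: i0; j0; k0])].
Proof.
have [a [b [c [ijk_abc abc_sorted]]]] :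
    exists a b c, perm_eq [:: i; j; k] [:: a; b; c] /\ sorted leq [:: a; b; c].
  have ijk_sort : perm_eq [:: i; j; k] (sort leq [:: i; j; k]).
    by rewrite perm_sym perm_sort.
  move: (size_sort leq [:: i; j; k]) ijk_sort (sort_sorted leq_total [:: i; j; k]).
  case: (sort _ _) => [|a [|b [|c [|d s]]]] size3; try discriminate size3.
  by exists a, b, c.
move: abc_sorted => /and3P [ab bc _].
move: ab bc ijk_abc; rewrite leq_eqVlt => /predU1P [<-|ab].
all: rewrite leq_eqVlt => /predU1P [<-|bc] ijk_abc.
- exists (embed3 a a.+1 a.+2), 0%N, 0%N, 0%N; split => //.
  by apply: embed3_incr; rewrite !ltnSn.
- exists (embed3 a c c.+1), 0%N, 0%N, 1%N; split => //.
  by apply: embed3_incr; rewrite bc ltnSn.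
- exists (embed3 a b b.+1), 0%N, 1%N, 1%N; split => //.
  by apply: embed3_incr; rewrite ab ltnSn.
- exists (embed3 a b c), 0%N, 1%N, 2%N; split => //.
  by apply: embed3_incr; rewrite ab bc.
Qed.

Section Relations.
Variable C : numClosedFieldType.
Implicit Types (p xa xb xc : C) (A B : word3 -> word3 -> C).

Definition mul_on (s : seq word3) A B (w v : word3) : C := \sum_(u <- s) A w u * B u v.

Lemma subM_mul N i j k A B :
  subM N i j k A *m subM N i j k B = subM N i j k (mul_on (rearr N i j k) A B).
Proof.
apply/matrixP => r s; rewrite !mxE /mul_on (big_nth (0, 0, 0)%N) big_mkord.
by apply: eq_bigr => t _; rewrite !mxE.
Qed.

Lemma subM1 N i j k :
  subM N i j k (fun w v => (w == v)%:R) = 1%:M :> 'M[C]_(size (rearr N i j k)).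
Proof. by apply/matrixP => r s; rewrite !mxE nth_uniq ?uniq_rearr. Qed.

Lemma eq_subM N i j k A B :
  {in rearr N i j k &, forall w v, A w v = B w v} -> subM N i j k A = subM N i j k B.
Proof. by move=> AB; apply/matrixP => r s; rewrite !mxE AB ?mem_nth. Qed.

Lemma mul_on_relabel g s L A B A' B' :
  perm_eq s (map (relabel g) L) ->
  (forall w v, A (relabel g w) (relabel g v) = A' w v) ->
  (forall w v, B (relabel g w) (relabel g v) = B' w v) ->
  forall w v, mul_on s A B (relabel g w) (relabel g v) = mul_on L A' B' w v.
Proof.
move=> sL AA' BB' w v; rewrite /mul_on (perm_big _ sL) big_map.
by apply: eq_bigr => u _; rewrite AA' BB'.
Qed.

Definition R_relations_on (L : seq word3) : Prop :=
  forall p xa xb xc,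
  (Dd p xa xb != 0 -> Dd p xb xa != 0 ->
    {in L &, forall w v, mul_on L (RI p xa xb) (RI p xb xa) w v = (w == v)%:R} /\
    {in L &, forall w v, mul_on L (IR p xa xb) (IR p xb xa) w v = (w == v)%:R}) /\
  (Dd p xb xc != 0 -> Dd p xa xc != 0 -> Dd p xa xb != 0 ->
    {in L &, forall w v,
      mul_on L (mul_on L (RI p xb xc) (IR p xa xc)) (RI p xa xb) w v =
      mul_on L (mul_on L (IR p xa xb) (RI p xa xc)) (IR p xb xc) w v}).

Lemma R_relations_order_patterns i0 j0 k0 :
  (i0, j0, k0) \in order_patterns -> R_relations_on (rearr 3 i0 j0 k0).
Proof.
rewrite !inE => /or4P [] /eqP [-> -> ->] p xa xb xc; rewrite /rearr /words3 /=.
all: rewrite /Dd /qq; split => [hab hba | hbc hac hab]; [split|].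
all: move=> w v wL vL; apply/eqP; move: v vL; apply/allP; move: w wL; apply/allP.
all: rewrite /= ?andbT; repeat (apply/andP; split); apply/eqP.
all: rewrite /mul_on unlock /RI /IR /Rent /= /Sc /Pc /Qc /Tc /Dd /qq.
all: field; repeat (apply/andP; split); assumption.
Qed.

Section Relabel.
Variable g : nat -> nat.
Hypothesis g_incr : {homo g : m n / (m < n)%N}.

Let g_inj : injective g := incn_inj (leq_mono g_incr).
Let g_ltn : {mono g : m n / (m < n)%N} := leqW_mono (leq_mono g_incr).

Lemma Rent_relabel p xa xb a b a' b' :
  Rent p xa xb (g a) (g b) (g a') (g b') = Rent p xa xb a b a' b'.
Proof. by rewrite /Rent !(inj_eq g_inj) !g_ltn. Qed.

Lemma RI_relabel p xa xb w v : RI p xa xb (relabel g w) (relabel g v) = RI p xa xb w v.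
Proof.
by case: w v => [[a b] c] [[a' b'] c']; rewrite /RI /= Rent_relabel (inj_eq g_inj).
Qed.

Lemma IR_relabel p xa xb w v : IR p xa xb (relabel g w) (relabel g v) = IR p xa xb w v.
Proof.
by case: w v => [[a b] c] [[a' b'] c']; rewrite /IR /= Rent_relabel (inj_eq g_inj).
Qed.

Lemma subM_R_relations N i j k M i0 j0 k0 :
  all (fun x => x < N)%N [:: i; j; k] -> all (fun x => x < M)%N [:: i0; j0; k0] ->
  perm_eq [:: i; j; k] (map g [:: i0; j0; k0]) ->
  R_relations_on (rearr M i0 j0 k0) -> forall p xa xb xc,
  (Dd p xa xb != 0 -> Dd p xb xa != 0 ->
     subM N i j k (RI p xa xb) *m subM N i j k (RI p xb xa) = 1%:M /\
     subM N i j k (IR p xa xb) *m subM N i j k (IR p xb xa) = 1%:M) /\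
  (Dd p xb xc != 0 -> Dd p xa xc != 0 -> Dd p xa xb != 0 ->
     subM N i j k (RI p xb xc) *m subM N i j k (IR p xa xc) *m subM N i j k (RI p xa xb)
     = subM N i j k (IR p xa xb) *m subM N i j k (RI p xa xc) *m subM N i j k (IR p xb xc)).
Proof.
move=> ijkN ijkM ijk_g rel p xa xb xc.
have rg := rearr_relabel g_inj ijkN ijkM ijk_g.
have transfer A B : {in rearr M i0 j0 k0 &, forall w v,
    A (relabel g w) (relabel g v) = B (relabel g w) (relabel g v)} ->
    subM N i j k A = subM N i j k B.
  move=> AB; apply: eq_subM => w v; rewrite !(perm_mem rg).
  by move=> /mapP [w0 w0L ->] /mapP [v0 v0L ->]; apply: AB.
have [inv braid] := rel p xa xb xc.
split => [hab hba | hbc hac hab]; rewrite !subM_mul.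
  have [inv_RI inv_IR] := inv hab hba.
  rewrite -!subM1; split; apply: transfer => w v wL vL;
    rewrite (inj_eq (relabel_inj g_inj)).
    by rewrite (mul_on_relabel rg (RI_relabel _ _ _) (RI_relabel _ _ _)) inv_RI.
  by rewrite (mul_on_relabel rg (IR_relabel _ _ _) (IR_relabel _ _ _)) inv_IR.
apply: transfer => w v wL vL.
rewrite (mul_on_relabel rg (mul_on_relabel rg (RI_relabel _ _ _) (IR_relabel _ _ _))
                        (RI_relabel _ _ _)).
rewrite (mul_on_relabel rg (mul_on_relabel rg (IR_relabel _ _ _) (RI_relabel _ _ _))
                        (IR_relabel _ _ _)).
exact: braid.
Qed.

End Relabel.
End Relations.

Theorem mainTheorem3 (C : numClosedFieldType) (p : C) (N : nat) (i j k : 'I_N)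
    (xa xb xc : C) :
  0 < p -> p < 1 -> (1 <= N)%N ->
  xa != 0 -> xb != 0 -> xc != 0 ->
  (* (a): R_{beta alpha} and R_{alpha beta} are defined *)
  (Dd p xa xb != 0 -> Dd p xb xa != 0 ->
     subM N i j k (RI p xa xb) *m subM N i j k (RI p xb xa) = 1%:M /\
     subM N i j k (IR p xa xb) *m subM N i j k (IR p xb xa) = 1%:M)
  /\
  (* (b): R_{gamma beta}, R_{gamma alpha}, R_{beta alpha} are defined *)
  (Dd p xb xc != 0 -> Dd p xa xc != 0 -> Dd p xa xb != 0 ->
     subM N i j k (RI p xb xc) *m subM N i j k (IR p xa xc) *m subM N i j k (RI p xa xb)
     = subM N i j k (IR p xa xb) *m subM N i j k (RI p xa xc) *m subM N i j k (IR p xb xc)).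
Proof.
move=> _ _ _ _ _ _.
have [g [i0 [j0 [k0 [g_incr pattern ijk_g]]]]] := order_pattern3 i j k.
have ijkN : all (fun x => x < N)%N [:: (i : nat); (j : nat); (k : nat)].
  by rewrite /= !ltn_ord.
have ijk3 : all (fun x => x < 3)%N [:: i0; j0; k0].
  by move: pattern; rewrite !inE => /or4P [] /eqP [-> -> ->].
exact: (subM_R_relations (C := C) g_incr ijkN ijk3 ijk_g
                          (R_relations_order_patterns pattern)).
Qed.
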